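(* Let $V_1,V_2,\ldots$ be pairwise uncorrelated zero-mean random variables, all with the same variance $\sigma^2$, where $0<\sigma<\infty$, and let $T_n := \frac{1}{\sigma\sqrt n}\sum_{k=1}^n V_k$. Let $n_1<n_2<\cdots$ be natural numbers with $\lim_{m\to\infty} n_{m+1}/n_m = 1$. If $T_{n_1},T_{n_2},\ldots$ converges in law to a random variable $T$, then the whole sequence $T_1,T_2,\ldots$ converges in law to $T$. *)

From HB Require Import structures.
From mathcomp Require Import all_boot all_order all_algebra.
From mathcomp Require Import all_classical all_reals all_analysis.
Set Implicit Arguments. Unset Strict Implicit. Unset Printing Implicit Defensive.
Import Order.TTheory GRing.Theory Num.Theory.
Import numFieldNormedType.Exports.
Local Open Scope classical_set_scope.
Local Open Scope ring_scope.

Definition distr_fun d (Om : measurableType d) (R : realType)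
  (Q : probability Om R) (T : Om -> R) (x : R) : R :=
  fine (Q [set w | T w <= x]).

Definition cvg_in_law d (Om : measurableType d) d' (Om' : measurableType d')
  (R : realType) (P : probability Om R) (Q : probability Om' R)
  (X : nat -> Om -> R) (T : Om' -> R) : Prop :=
  forall x : R, {for x, continuous (distr_fun Q T)} ->
    (fun n => distr_fun P (X n) x) @ \oo --> distr_fun Q T x.

Definition norm_sum d (Om : measurableType d) (R : realType)
  (V : nat -> Om -> R) (sigma : R) (n : nat) : Om -> R :=
  fun w => (sigma * Num.sqrt (n%:R))^-1 * \sum_(1 <= k < n.+1) V k w.

From HB Require Import structures.
From mathcomp Require Import all_boot all_order all_algebra.
From mathcomp Require Import all_classical all_reals all_analysis.
From mathcomp Require Import measurable_realfun ring lra.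
Import Order.TTheory GRing.Theory Num.Theory.
Import numFieldNormedType.Exports.
Local Open Scope classical_set_scope.
Local Open Scope ring_scope.

(* For n_m <= n < n_(m+1), T_n = sqrt(n_m / n) T_(n_m) + R_n where
   R_n = (sigma sqrt n)^-1 (V_(n_m + 1) + ... + V_n). The factor sqrt(n_m / n)
   tends to 1, and since the V_k are uncorrelated, Chebyshev's inequality gives
   P(|R_n| >= e) <= (n - n_m) / (n e^2) <= (n_(m+1) / n_m - 1) / e^2, which
   tends to 0. A Slutsky-type argument on distribution functions then carries
   the limit law of T_(n_m) over to T_n. *)

Lemma nondecreasing_continuous_at (R : realType) (F : R -> R) (y : R) :
  nondecreasing_fun F -> ~ discontinuity F y -> {for y, continuous F}.
Proof.
move=> ndF nojump.
have cvg_left : cvg (F x @[x --> y^'-]).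
  apply: nondecreasing_at_left_is_cvgr; first by near=> z => a b _ _; exact: ndF.
  near=> z; exists (F y) => _ [s /= sz <-]; apply: ndF.
  by move: sz; rewrite in_itv/= => /andP[_ /ltW].
have cvg_right : cvg (F x @[x --> y^'+]).
  apply: nondecreasing_at_right_is_cvgr; first by near=> z => a b _ _; exact: ndF.
  near=> z; exists (F y) => _ [s /= sz <-]; apply: ndF.
  by move: sz; rewrite in_itv/= => /andP[/ltW].
have left_le : lim (F x @[x --> y^'-]) <= F y.
  by apply: limr_le => //; near=> z; apply/ndF/ltW; near: z; exact: nbhs_left_lt.
have right_ge : F y <= lim (F x @[x --> y^'+]).
  by apply: limr_ge => //; near=> z; apply/ndF/ltW; near: z; exact: nbhs_right_gt.
have lim_eq : lim (F x @[x --> y^'-]) = lim (F x @[x --> y^'+]).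
  by apply/eqP; apply: contrapT => /negP neq; apply: nojump.
have Fy_left : F y = lim (F x @[x --> y^'-]).
  by apply/le_anti; rewrite left_le lim_eq right_ge.
apply/left_right_continuousP; split; first by rewrite Fy_left.
by rewrite Fy_left lim_eq.
Unshelve. all: by end_near. Qed.

(* The discontinuities of a monotone function are countable, whereas an open
   interval is not. *)
Lemma nondecreasing_continuity_point_itv (R : realType) (F : R -> R) (a b : R) :
  nondecreasing_fun F -> a < b ->
  exists y, [/\ a < y, y < b & {for y, continuous F}].
Proof.
move=> ndF ab; apply: contrapT => noy.
have jumps : `]a, b[ `<=` [set x | (x \in `]a, b[) /\ discontinuity F x].
  move=> y yab; split; first by rewrite inE.
  apply: contrapT => nojump; apply: noy; exists y.
  move: yab; rewrite /= in_itv/= => /andP[ay yb]; split => //.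
  exact: nondecreasing_continuous_at.
have : countable [set` `]a, b[].
  apply: sub_countable (subset_card_le jumps) _.
  by apply: discontinuity_countable => u v _ _; exact: ndF.
move=> /countable_lebesgue_measure0; rewrite lebesgue_measure_itv/= lte_fin ab.
by move=> /eqP; rewrite eqe subr_eq0 => /eqP ba; move: ab; rewrite ba ltxx.
Qed.

Lemma nondecreasing_continuity_points_near {R : realType} {F : R -> R} {x eps : R} :
  nondecreasing_fun F -> {for x, continuous F} -> 0 < eps ->
  exists ym yp, [/\ ym < x < yp, {for ym, continuous F}, {for yp, continuous F},
    `|F x - F ym| < eps & `|F x - F yp| < eps].
Proof.
move=> ndF Fx eps_gt0.
have [eta eta_gt0 Fx_near] : exists2 eta, 0 < eta &
    forall y, `|x - y| < eta -> `|F x - F y| < eps.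
  move: Fx => /cvgrPdist_lt /(_ eps eps_gt0) [eta eta_gt0 Fx_near].
  by exists eta => // y xy; exact: Fx_near.
have [ym [ym_gt ym_x Fym]] : exists y, [/\ x - eta < y, y < x & {for y, continuous F}].
  by apply: nondecreasing_continuity_point_itv => //; lra.
have [yp [x_yp yp_lt Fyp]] : exists y, [/\ x < y, y < x + eta & {for y, continuous F}].
  by apply: nondecreasing_continuity_point_itv => //; lra.
exists ym, yp; split; rewrite ?ym_x ?x_yp //; apply: Fx_near; rewrite ltr_norml; lra.
Qed.

Section distribution_function.
Context {d} {Om : measurableType d} {R : realType} (P : probability Om R).
Implicit Types (X Y : Om -> R) (A B C : set Om).

Lemma measurable_sublevel X y : measurable_fun setT X ->
  measurable [set w | X w <= y].
Proof.
by move=> mX; have := mX measurableT _ (measurable_itv `]-oo, y]); rewrite set_itvNyc setTI.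
Qed.

Lemma measurable_superlevel X y : measurable_fun setT X ->
  measurable [set w | y <= X w].
Proof.
by move=> mX; have := mX measurableT _ (measurable_itv `[y, +oo[); rewrite set_itvcy setTI.
Qed.

Lemma fine_measure_subU A B C : measurable A -> measurable B -> measurable C ->
  A `<=` B `|` C -> fine (P A) <= fine (P B) + fine (P C).
Proof.
move=> mA mB mC ABC; rewrite -lee_fin EFinD !fineK ?fin_num_measure //.
apply: le_trans (measureU2 P mB mC).
by apply: le_measure => //; rewrite inE //; exact: measurableU.
Qed.

Lemma distr_fun_nondecreasing X : measurable_fun setT X ->
  nondecreasing_fun (distr_fun P X).
Proof.
move=> mX u v uv; rewrite /distr_fun.
apply: fine_le; try apply: fin_num_measure; try exact: measurable_sublevel.
apply: le_measure; rewrite ?inE; try exact: measurable_sublevel.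
by move=> w /= Xu; exact: le_trans uv.
Qed.

Let measurable_dev X Y a e : measurable_fun setT X -> measurable_fun setT Y ->
  measurable [set w | e <= `|Y w - a * X w|].
Proof.
move=> mX mY; apply: measurable_superlevel; apply: measurableT_comp => //.
by apply: measurable_funB => //; exact: measurable_funM.
Qed.

Lemma distr_fun_le_perturb {X Y} {a e x y : R} :
  measurable_fun setT X -> measurable_fun setT Y -> 0 < a -> x + e <= a * y ->
  distr_fun P Y x <= distr_fun P X y + fine (P [set w | e <= `|Y w - a * X w|]).
Proof.
move=> mX mY a_gt0 xay; apply: fine_measure_subU;
  [exact: measurable_sublevel.. | exact: measurable_dev | ].
move=> w /= Yx; have [dev|small] := pselect (e <= `|Y w - a * X w|); [by right | left].
move/negP: small; rewrite -ltNge ltr_distlC => /andP[_ lt_aX].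
by rewrite -(ler_pM2l a_gt0) ltW // (lt_le_trans _ xay) // (lt_le_trans lt_aX) // lerD2r.
Qed.

Lemma distr_fun_ge_perturb {X Y} {a e x y : R} :
  measurable_fun setT X -> measurable_fun setT Y -> 0 <= a -> a * y + e <= x ->
  distr_fun P X y <= distr_fun P Y x + fine (P [set w | e <= `|Y w - a * X w|]).
Proof.
move=> mX mY a_ge0 ayx; apply: fine_measure_subU;
  [exact: measurable_sublevel.. | exact: measurable_dev | ].
move=> w /= Xy; have [dev|small] := pselect (e <= `|Y w - a * X w|); [by right | left].
move/negP: small; rewrite -ltNge ltr_distl => /andP[_ lt_Y].
by rewrite ltW // (lt_le_trans lt_Y) // (le_trans _ ayx) // lerD2r ler_wpM2l.
Qed.
End distribution_function.

Definition cvg_in_prob0 {d} {Om : measurableType d} {R : realType}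
  (P : probability Om R) (Z : nat -> Om -> R) : Prop :=
  forall e, 0 < e -> (fun n => fine (P [set w | e <= `|Z n w|])) @ \oo --> 0.

Lemma cvg_in_law_slutsky {d} {Om : measurableType d} {d'} {Om' : measurableType d'}
    {R : realType} {P : probability Om R} {Q : probability Om' R}
    {X Y : nat -> Om -> R} {a : nat -> R} {T : Om' -> R} :
  (forall n, measurable_fun setT (X n)) -> (forall n, measurable_fun setT (Y n)) ->
  measurable_fun setT T -> a @ \oo --> (1 : R) ->
  cvg_in_prob0 P (fun n w => Y n w - a n * X n w) ->
  cvg_in_law P Q X T -> cvg_in_law P Q Y T.
Proof.
move=> mX mY mT a_cvg1 dev0 XT x Fx; set F := distr_fun Q T.
have ndF : nondecreasing_fun F by exact: distr_fun_nondecreasing.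
apply/cvgrPdist_le => eps eps_gt0.
have eps2_gt0 : 0 < eps / 2 by lra.
have [ym [yp [/andP[ym_x x_yp] Fym Fyp]]] :=
  nondecreasing_continuity_points_near ndF Fx eps2_gt0.
move=> /ltr_normlP[Fym_lo Fym_hi] /ltr_normlP[Fyp_lo Fyp_hi].
have ayp_cvg : a n * yp @[n --> \oo] --> yp.
  by rewrite -[X in _ --> X]mul1r; apply: cvgM => //; exact: cvg_cst.
have aym_cvg : a n * ym @[n --> \oo] --> ym.
  by rewrite -[X in _ --> X]mul1r; apply: cvgM => //; exact: cvg_cst.
have [eu_gt0 el_gt0] : 0 < (yp - x) / 2 /\ 0 < (x - ym) / 2 by split; lra.
near=> n.
have a_gt0 : 0 < a n by near: n; apply: (cvgr_gt 1 a_cvg1); exact: ltr01.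
have ayp : x + (yp - x) / 2 <= a n * yp.
  by apply: ltW; near: n; apply: (cvgr_gt yp ayp_cvg); lra.
have aym : a n * ym + (x - ym) / 2 <= x.
  rewrite -lerBrDr; apply: ltW; near: n; apply: (cvgr_lt ym aym_cvg); lra.
have Xyp : `|F yp - distr_fun P (X n) yp| < eps / 4.
  by near: n; move/cvgrPdist_lt : (XT yp Fyp); apply; lra.
have Xym : `|F ym - distr_fun P (X n) ym| < eps / 4.
  by near: n; move/cvgrPdist_lt : (XT ym Fym); apply; lra.
have dev_up : fine (P [set w | (yp - x) / 2 <= `|Y n w - a n * X n w|]) < eps / 4.
  by near: n; apply: (cvgr_lt 0 (dev0 _ eu_gt0)); lra.
have dev_lo : fine (P [set w | (x - ym) / 2 <= `|Y n w - a n * X n w|]) < eps / 4.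
  by near: n; apply: (cvgr_lt 0 (dev0 _ el_gt0)); lra.
have up := distr_fun_le_perturb P (mX n) (mY n) a_gt0 ayp.
have lo := distr_fun_ge_perturb P (mX n) (mY n) (ltW a_gt0) aym.
move: Xyp Xym; rewrite !ltr_norml ler_norml => /andP[? ?] /andP[? ?].
by apply/andP; split; lra.
Unshelve. all: by end_near. Qed.

Section subsequence_index.
Variable nm : nat -> nat.
Hypothesis nm_incr : forall m, (nm m < nm m.+1)%N.

(* The m with nm m <= n < nm m.+1; junk value 0 when n < nm 0. *)
Definition subseq_index n := \max_(m < n.+1 | (nm m <= n)%N) m.

Let leq_nm m : (m <= nm m)%N.
Proof. by elim: m => // m IH; exact: leq_ltn_trans IH (nm_incr m). Qed.

Lemma subseq_index_le n : (nm 0 <= n)%N -> (nm (subseq_index n) <= n)%N.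
Proof.
move=> nm0_le; rewrite /subseq_index; elim/big_ind: _ => //.
by move=> i j ni nj; rewrite /maxn; case: ifP.
Qed.

Lemma subseq_index_lt n : (n < nm (subseq_index n).+1)%N.
Proof.
rewrite ltnNge; apply/negP => nm_le.
have lt_n1 : ((subseq_index n).+1 < n.+1)%N by exact: leq_trans (leq_nm _) nm_le.
have : (Ordinal lt_n1 <= subseq_index n)%N by exact: leq_bigmax_cond.
by rewrite /= ltnn.
Qed.

Lemma subseq_index_cvg : subseq_index @ \oo --> \oo.
Proof.
move=> A [M _ AM]; exists (nm M) => // n /= nmM_le; apply: AM.
have lt_n1 : (M < n.+1)%N by exact: leq_trans (leq_nm M) nmM_le.
have : (Ordinal lt_n1 <= subseq_index n)%N by exact: leq_bigmax_cond.
by [].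
Qed.

Lemma subseq_index_near : (0 < nm 0)%N ->
  \forall n \near \oo, (0 < nm (subseq_index n) <= n)%N.
Proof.
move=> nm0_gt0; exists (nm 0) => // n /= nm0_le; rewrite subseq_index_le // andbT.
by case: (subseq_index n) => // m; exact: leq_ltn_trans (leq0n _) (nm_incr m).
Qed.

End subsequence_index.

Lemma gap_le_ratio (R : realFieldType) (p n q : R) : 0 < p -> p <= n -> n <= q ->
  (n - p) / n <= q / p - 1.
Proof.
move=> p_gt0 pn nq; have n_gt0 : 0 < n by exact: lt_le_trans pn.
have -> : q / p - 1 = (q - p) / p by field; rewrite gt_eqF.
apply: (@le_trans _ _ ((n - p) / p)).
  by rewrite ler_wpM2l ?subr_ge0 // lef_pV2 ?posrE.
by rewrite ler_pM2r ?invr_gt0 // lerD2r.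
Qed.

Lemma sqrt_ratio_gap (R : rcfType) (p n : R) : 0 < p -> p <= n ->
  `|1 - Num.sqrt p / Num.sqrt n| <= (n - p) / n.
Proof.
move=> p_gt0 pn; have n_gt0 : 0 < n by exact: lt_le_trans pn.
set s := Num.sqrt p / Num.sqrt n.
have s_ge0 : 0 <= s by rewrite divr_ge0 ?sqrtr_ge0.
have s_le1 : s <= 1 by rewrite ler_pdivrMr ?sqrtr_gt0 // mul1r ler_wsqrtr.
have s2 : s ^+ 2 = p / n by rewrite expr_div_n !sqr_sqrtr ?ltW.
have -> : (n - p) / n = 1 - s ^+ 2 by rewrite s2; field; rewrite gt_eqF.
rewrite ger0_norm ?subr_ge0 // lerD2l lerN2 expr2 ler_piMl //.
Qed.

Lemma sqrt_ratio_cvg1 (R : realType) (p : nat -> nat) :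
  (\forall n \near \oo, (0 < p n <= n)%N) ->
  (fun n => (n%:R - (p n)%:R) / n%:R : R) @ \oo --> 0 ->
  (fun n => Num.sqrt (p n)%:R / Num.sqrt n%:R : R) @ \oo --> (1 : R).
Proof.
move=> p_near gap_cvg0; apply/cvgrPdist_le => e e_gt0.
near=> n; have /andP[p_gt0 pn] : (0 < p n <= n)%N by near: n.
apply: le_trans (@sqrt_ratio_gap _ (p n)%:R n%:R _ _) _; rewrite ?ltr0n ?ler_nat //.
near: n; move/cvgrPdist_le : gap_cvg0 => /(_ e e_gt0); apply: filterS => n.
by rewrite sub0r normrN; apply: le_trans; exact: ler_norm.
Unshelve. all: by end_near. Qed.

Lemma subseq_gap_cvg0 (R : realType) (nm : nat -> nat) : (0 < nm 0)%N ->
  (forall m, (nm m < nm m.+1)%N) ->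
  (fun m => (nm m.+1)%:R / (nm m)%:R : R) @ \oo --> (1 : R) ->
  (fun n => (n%:R - (nm (subseq_index nm n))%:R) / n%:R : R) @ \oo --> 0.
Proof.
move=> nm0_gt0 nm_incr ratio_cvg1.
have ratio_idx_cvg0 : (fun n => (nm (subseq_index nm n).+1)%:R /
    (nm (subseq_index nm n))%:R - 1 : R) @ \oo --> 0.
  rewrite -(subrr (1 : R)); apply: cvgB; last exact: cvg_cst.
  exact: cvg_comp _ _ (subseq_index_cvg _ nm_incr) ratio_cvg1.
apply: squeeze_cvgr; [|exact: cvg_cst|exact: ratio_idx_cvg0].
near=> n; have /andP[p_gt0 pn] : (0 < nm (subseq_index nm n) <= n)%N.
  by near: n; exact: subseq_index_near _ nm_incr nm0_gt0.
rewrite divr_ge0 ?subr_ge0 ?ler_nat //= gap_le_ratio ?ltr0n ?ler_nat //.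
exact/ltnW/subseq_index_lt.
Unshelve. all: by end_near. Qed.

Section uncorrelated_sum.
Context d (Om : measurableType d) (R : realType) (P : probability Om R).
Local Open Scope ereal_scope.

Lemma covariance_sum_l (I : eqType) (s : seq I) (X : I -> Om -> R) (Z : Om -> R) :
  {in s, forall i, X i \in Lfun P 2%:E} -> Z \in Lfun P 2%:E ->
  covariance P (\sum_(i <- s) X i)%R Z = \sum_(i <- s) covariance P (X i) Z.
Proof.
elim: s => [|i s IH] Xs_L2 Z_L2; first by rewrite !big_nil covariance_cst_l.
have Xs'_L2 : {in s, forall j, X j \in Lfun P 2%:E}.
  by move=> j js; apply: Xs_L2; rewrite inE js orbT.
rewrite !big_cons covarianceDl ?IH ?Xs_L2 ?mem_head //.
by rewrite big_seq rpred_sum // lee1n.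
Qed.

Lemma variance_sum_uncorrelated (I : eqType) (s : seq I) (X : I -> Om -> R) :
  uniq s -> {in s, forall i, X i \in Lfun P 2%:E} ->
  {in s &, forall i j, i != j -> covariance P (X i) (X j) = 0} ->
  'V_P[(\sum_(i <- s) X i)%R] = \sum_(i <- s) 'V_P[X i].
Proof.
elim: s => [|i s IH] /=; first by rewrite !big_nil variance_cst.
move=> /andP[i_notin s_uniq] Xs_L2 uncorr.
have Xs'_L2 : {in s, forall j, X j \in Lfun P 2%:E}.
  by move=> j js; apply: Xs_L2; rewrite inE js orbT.
have Xi_L2 : X i \in Lfun P 2%:E by apply: Xs_L2; rewrite mem_head.
have sum_L2 : (\sum_(j <- s) X j)%R \in Lfun P 2%:E.
  by rewrite big_seq rpred_sum // lee1n.
have cov0 : covariance P (X i) (\sum_(j <- s) X j)%R = 0.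
  rewrite covarianceC covariance_sum_l // big1_seq // => j /= js.
  apply: uncorr; rewrite ?inE ?js ?eqxx ?orbT //.
  by apply: contraNneq i_notin => <-.
rewrite !big_cons varianceD // cov0 mule0 adde0 IH //.
by move=> j k js ks; apply: uncorr; rewrite inE ?js ?ks orbT.
Qed.

End uncorrelated_sum.

Section normalized_sums.
Context d (Om : measurableType d) (R : realType) (P : probability Om R).
Variables (V : nat -> {RV P >-> R}) (sigma : R).
Hypotheses (sigma_gt0 : 0 < sigma)
  (V_L2 : forall k, (0 < k)%N -> (V k : Om -> R) \in Lfun P 2%:E)
  (V_mean0 : forall k, (0 < k)%N -> ('E_P[V k] = 0)%E)
  (V_var : forall k, (0 < k)%N -> ('V_P[V k] = (sigma ^+ 2)%:E)%E)
  (V_uncorrelated : forall i j, (0 < i)%N -> (0 < j)%N -> i != j ->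
     (covariance P (V i) (V j) = 0)%E).

Let S := norm_sum (fun k => V k : Om -> R) sigma.

Lemma measurable_norm_sum n : measurable_fun setT (S n).
Proof.
apply: (@measurable_funM _ _ _ _ (cst _) (fun w => \sum_(1 <= k < n.+1) V k w)) => //.
by apply: measurable_sum => k; exact: measurable_funP.
Qed.

Let block p n : {RV P >-> R} := \sum_(p.+1 <= k < n.+1) V k.

Let blockE p n : (block p n : Om -> R) = \sum_(p.+1 <= k < n.+1) (V k : Om -> R).
Proof. by apply/funext => w; rewrite mfun_sum fct_sumE. Qed.

Let block_index_gt0 p n k : k \in index_iota p.+1 n.+1 -> (0 < k)%N.
Proof. by rewrite mem_index_iota => /andP[pk _]; exact: leq_trans pk. Qed.

Lemma expectation_block p n : ('E_P[block p n] = 0)%E.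
Proof.
rewrite blockE.
have -> : \sum_(p.+1 <= k < n.+1) (V k : Om -> R) =
    \sum_(X <- map (fun k => V k : Om -> R) (index_iota p.+1 n.+1)) X.
  by rewrite big_map.
rewrite expectation_sum; last first.
  move=> X /mapP[k /block_index_gt0 k_gt0 ->].
  by apply: Lfun_subset12; [exact: fin_num_measure | exact: V_L2].
by rewrite big_map big1_seq // => k /andP[_ /block_index_gt0/V_mean0].
Qed.

Lemma variance_block p n : (p <= n)%N ->
  ('V_P[block p n] = ((n - p)%:R * sigma ^+ 2)%:E)%E.
Proof.
move=> pn; rewrite blockE variance_sum_uncorrelated ?iota_uniq //; last 2 first.
- by move=> k /block_index_gt0/V_L2.
- by move=> i j /block_index_gt0 i_gt0 /block_index_gt0; exact: V_uncorrelated.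
rewrite big_seq (eq_bigr (fun=> (sigma ^+ 2)%:E)); last first.
  by move=> k /block_index_gt0/V_var.
by rewrite -big_seq sumEFin sumr_const_nat subSS mulr_natl.
Qed.

Lemma norm_sum_split p n w : (0 < p)%N -> (p <= n)%N ->
  S n w - Num.sqrt p%:R / Num.sqrt n%:R * S p w =
  (sigma * Num.sqrt n%:R)^-1 * block p n w.
Proof.
move=> p_gt0 pn; rewrite /S /norm_sum mfun_sum (@big_cat_nat _ _ _ p.+1) //=.
have sp_gt0 : 0 < Num.sqrt (p%:R : R) by rewrite sqrtr_gt0 ltr0n.
have sn_gt0 : 0 < Num.sqrt (n%:R : R) by rewrite sqrtr_gt0 ltr0n (leq_trans p_gt0).
by field; rewrite !gt_eqF.
Qed.

Lemma norm_sum_dev_le p n e : (0 < p)%N -> (p <= n)%N -> 0 < e ->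
  fine (P [set w | e <= `|S n w - Num.sqrt p%:R / Num.sqrt n%:R * S p w|]) <=
  (n%:R - p%:R) / n%:R / e ^+ 2.
Proof.
move=> p_gt0 pn e_gt0; have n_gt0 : (0 < n)%N := leq_trans p_gt0 pn.
set c := sigma * Num.sqrt n%:R.
have c_gt0 : 0 < c by rewrite mulr_gt0 // sqrtr_gt0 ltr0n.
have -> : [set w | e <= `|S n w - Num.sqrt p%:R / Num.sqrt n%:R * S p w|] =
    [set w | e * c <= `|block p n w - fine 'E_P[block p n]|].
  apply: eq_set => w; rewrite norm_sum_split // expectation_block subr0.
  by rewrite normrM gtr0_norm ?invr_gt0 // mulrC ler_pdivlMr.
have dev_meas : measurable [set w | e * c <= `|block p n w - fine 'E_P[block p n]|].
  apply: measurable_superlevel; apply: measurableT_comp => //.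
  exact: measurable_funB.
have := chebyshev (block p n) (mulr_gt0 e_gt0 c_gt0).
rewrite variance_block // -EFinM -lee_fin fineK ?fin_num_measure // => /le_trans; apply.
have c2 : c ^+ 2 = sigma ^+ 2 * n%:R by rewrite exprMn sqr_sqrtr.
rewrite lee_fin natrB // exprMn c2.
rewrite [X in X <= _](_ : _ = (n%:R - p%:R) / n%:R / e ^+ 2) //.
by field; rewrite !gt_eqF ?ltr0n // exprn_gt0.
Qed.

Lemma norm_sum_dev_cvg0 (p : nat -> nat) :
  (\forall n \near \oo, (0 < p n <= n)%N) ->
  (fun n => (n%:R - (p n)%:R) / n%:R : R) @ \oo --> 0 ->
  cvg_in_prob0 P (fun n w => S n w - Num.sqrt (p n)%:R / Num.sqrt n%:R * S (p n) w).
Proof.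
move=> p_near gap_cvg0 e e_gt0.
apply: (@squeeze_cvgr _ _ _ _ (cst 0) (fun n => (n%:R - (p n)%:R) / n%:R / e ^+ 2)).
- near=> n; have /andP[p_gt0 pn] : (0 < p n <= n)%N by near: n.
  by rewrite fine_ge0 ?measure_ge0 //= norm_sum_dev_le.
- exact: cvg_cst.
- by rewrite -(mul0r (e ^+ 2)^-1); apply: cvgM => //; exact: cvg_cst.
Unshelve. all: by end_near. Qed.

End normalized_sums.

Theorem lemma2p4 (R : realType) (d : measure_display) (Om : measurableType d)
  (P : probability Om R) (V : nat -> {RV P >-> R}) (sigma : R)
  (d' : measure_display) (Om' : measurableType d') (Q : probability Om' R)
  (T : {RV Q >-> R}) (nm : nat -> nat) :
  0 < sigma ->
  (forall k, (0 < k)%N -> (V k : Om -> R) \in Lfun P 2) ->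
  (forall k, (0 < k)%N -> ('E_P[V k] = 0)%E) ->
  (forall k, (0 < k)%N -> ('V_P[V k] = (sigma ^+ 2)%:E)%E) ->
  (forall i j, (0 < i)%N -> (0 < j)%N -> i != j -> (covariance P (V i) (V j) = 0)%E) ->
  (0 < nm 0)%N ->
  (forall m, (nm m < nm m.+1)%N) ->
  (fun m => (nm m.+1)%:R / (nm m)%:R : R) @ \oo --> (1 : R) ->
  cvg_in_law P Q (fun m => norm_sum (fun k => V k : Om -> R) sigma (nm m)) T ->
  cvg_in_law P Q (norm_sum (fun k => V k : Om -> R) sigma) T.
Proof.
move=> sigma_gt0 V_L2 V_mean0 V_var V_uncorrelated nm0_gt0 nm_incr ratio_cvg1 law_sub.
pose p n := nm (subseq_index nm n).
have p_near : \forall n \near \oo, (0 < p n <= n)%N.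
  exact: subseq_index_near _ nm_incr nm0_gt0.
have gap_cvg0 := subseq_gap_cvg0 R nm nm0_gt0 nm_incr ratio_cvg1.
apply: (cvg_in_law_slutsky
  (X := fun n => norm_sum (fun k => V k : Om -> R) sigma (p n))
  (a := fun n => Num.sqrt (p n)%:R / Num.sqrt n%:R)).
- by move=> n; exact: measurable_norm_sum.
- exact: measurable_norm_sum.
- exact: measurable_funP.
- exact: sqrt_ratio_cvg1 p_near gap_cvg0.
- exact: norm_sum_dev_cvg0 p_near gap_cvg0.
- by move=> x Fx; exact: cvg_comp _ _ (subseq_index_cvg _ nm_incr) (law_sub x Fx).
Qed.
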